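(* Suppose that bounded operators $B(x):\mathbb C^2\to\mathcal K$, $C(x):\mathcal K\to\mathbb C^2$, $\mathbb X(x):\mathcal K\to\mathcal K$, differentiable in $x\in\mathbb R$, satisfy $\frac{\partial}{\partial x}B(x)=-(AB\sigma_2+B\gamma)\sigma_1^{-1}$, $\frac{\partial}{\partial x}C(x)u=\sigma_1^{-1}(-\sigma_2 C A_\zeta u+\gamma C u)$ for all $u\in D(A_\zeta)$, and $\frac{\partial}{\partial x}\mathbb X=B\sigma_2C$, and that $\mathbb X(x)(D(A_\zeta))\subseteq D(A)$ for all $x\in\mathbb R$. If the Lyapunov equation $A\mathbb X(x)u+\mathbb X(x)A_\zeta u+B(x)\sigma_1C(x)u=0$ (for all $u\in D(A)$) holds for a fixed $x_0$, then it holds for all $x$. In the case the operator $\mathbb X(x)$ is invertible and $B(x),C(x),\mathbb X(x)$ are part of an invertible node, if the equation $A_\zeta\mathbb X^{-1}(x)u'+\mathbb X^{-1}(x)Au'+\mathbb X^{-1}(x)B(x)\sigma_1C(x)\mathbb X^{-1}(x)u'=0$ (for all $u'\in D(A)$) holds for a fixed $x_0$, then it holds for all $x$.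
   Context: $\mathcal K$ is a Krein space; $A,A_\zeta$ are generators of $C_0$ groups on $\mathcal K$ with identical dense domain $D(A)=D(A_\zeta)$; $\sigma_1=\sigma_1^*$ is an invertible $2\times2$ matrix, $\sigma_2=\sigma_2^*$ and $\gamma=-\gamma^*$ are fixed $2\times2$ matrices; $B(x)\sigma_2$ is $A$-regular, i.e. $B(x)\sigma_2 e\in D(A)$ for all $e\in\mathbb C^2$. An invertible node means: $\mathbb X$ is invertible with $\mathbb X(D(A))\subseteq D(A)$ and $\mathbb X^{-1}(D(A))\subseteq D(A)$, and the Lyapunov equation $A\mathbb Xu+\mathbb XA_\zeta u+B\sigma_1Cu=0$ holds for $u\in D(A)$. *)

From HB Require Import structures.
From mathcomp Require Import all_boot all_order all_algebra.
From mathcomp Require Import all_classical all_reals all_analysis.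
From mathcomp Require Import complex.
Import Order.TTheory GRing.Theory Num.Theory.
Import numFieldNormedType.Exports.

Set Implicit Arguments.
Unset Strict Implicit.
Unset Printing Implicit Defensive.

Local Open Scope ring_scope.
Local Open Scope classical_set_scope.
Local Open Scope complex_scope.

(* Krein space structure on a complex Banach space K:
   ip is a hermitian sesquilinear (indefinite) inner product [.,.], and there is a
   fundamental symmetry J (bounded, linear, J^2 = I, ip-selfadjoint) such that
   [J.,.] is a positive definite inner product whose norm is equivalent to the
   norm of K (so K is complete for it). *)
Definition krein_space (R : realType) (K : completeNormedModType R[i])
    (ip : K -> K -> R[i]) : Prop :=
  (forall (a : R[i]) (u v w : K), ip (a *: u + v) w = a * ip u w + ip v w) /\
  (forall u v : K, ip u v = (ip v u)^*) /\
  exists J : K -> K,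
    [/\ linear J, continuous J,
        (forall u, J (J u) = u),
        (forall u v, ip (J u) v = ip u (J v)) &
        exists c1 c2 : R[i], [/\ 0 < c1, 0 < c2 &
          forall u, c1 * `|u| ^+ 2 <= ip (J u) u <= c2 * `|u| ^+ 2]].

Definition bounded_op (R : realType) (V W : normedModType R[i]) (T : V -> W) : Prop :=
  linear T /\ continuous T.

Definition C0_group (R : realType) (K : normedModType R[i]) (T : R -> K -> K) : Prop :=
  [/\ (forall t, bounded_op (T t)),
      (forall u, T 0 u = u),
      (forall s t u, T (s + t) u = T s (T t u)) &
      (forall u, continuous (fun t => T t u))].

Definition generator (R : realType) (K : normedModType R[i]) (T : R -> K -> K)
    (D : set K) (A : K -> K) : Prop :=
  forall u : K,
    (D u <-> exists v : K,
        (fun h : R => (h%:C)^-1 *: (T h u - u)) @ 0^' --> v) /\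
    (D u -> (fun h : R => (h%:C)^-1 *: (T h u - u)) @ 0^' --> A u).

Definition C0_group_generator (R : realType) (K : normedModType R[i])
    (D : set K) (A : K -> K) : Prop :=
  exists T : R -> K -> K, C0_group T /\ generator T D A.

Definition op_deriv (R : realType) (V W : normedModType R[i])
    (F : R -> V -> W) (F' : V -> W) (x : R) : Prop :=
  bounded_op F' /\
  forall eps : R[i], 0 < eps ->
    \forall h \near (0 : R)^',
      forall u : V, `|(h%:C)^-1 *: (F (x + h) u - F x u) - F' u| <= eps * `|u|.

Definition adjmx (R : realType) (M : 'M[R[i]]_2) : 'M[R[i]]_2 := map_mx conjc M^T.

(* For fixed u in D put f x := X x u and g x := - (X x (Az u) + B x (sigma1 C x u)),
   so that the Lyapunov equation at x says that (f x, g x) lies in the graph of A.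
   The differential equations give f' = B sigma2 C u in D and g' = A f': the
   velocity lies in the graph, a linear subspace, so the distance from (f x, g x)
   to the graph has zero derivative and is constant.  The graph of a generator is
   closed, hence distance zero means membership.  Closedness is shown without
   integrating K-valued functions, by comparing T h z - z with Riemann sums of the
   orbit, using Banach-Steinhaus for a uniform bound of T on [0, 1].  The equation
   for the inverse is the first one conjugated by X x. *)

From HB Require Import structures.
From mathcomp Require Import all_boot all_order all_algebra.
From mathcomp Require Import all_classical all_reals all_analysis.
From mathcomp Require Import complex.
From mathcomp Require Import ring lra.
Import Order.TTheory GRing.Theory Num.Theory.
Import numFieldNormedType.Exports.
Local Open Scope ring_scope.
Local Open Scope classical_set_scope.
Local Open Scope complex_scope.

Set Implicit Arguments.
Unset Strict Implicit.

(* Norms in a normed R[i]-module are real numbers embedded in R[i]; [rnorm] reads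
   them in R, where the order is total and [lra] applies. *)
Section RealNorm.
Context {R : realType}.

Definition rnormc (c : R[i]) : R := complex.Re `|c|.
Definition rnorm {V : normedModType R[i]} (v : V) : R := complex.Re `|v|.

Lemma rnormcE (c : R[i]) : `|c| = (rnormc c)%:C.
Proof. by rewrite /rnormc RRe_real // normr_real. Qed.

Lemma rnormcR (r : R) : rnormc r%:C = `|r|.
Proof. by apply: complexI; rewrite -rnormcE normc_def /= expr0n /= addr0 sqrtr_sqr. Qed.

Lemma gt0_realC (e : R[i]) : 0 < e -> e = (complex.Re e)%:C.
Proof. by case: e => a b; rewrite ltcE /= => /andP[/eqP -> _]. Qed.

Lemma gt0_Re (e : R[i]) : 0 < e -> 0 < complex.Re e.
Proof. by rewrite ltcE => /andP[]. Qed.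

Lemma realC_eq0 (r : R) : (r%:C == 0) = (r == 0).
Proof. by apply/eqP/eqP => [/(congr1 (@complex.Re R))|->]. Qed.

Context {V : normedModType R[i]}.

Lemma rnormE (v : V) : `|v| = (rnorm v)%:C.
Proof. by rewrite /rnorm RRe_real // normr_real. Qed.

Lemma rnorm_ge0 (v : V) : 0 <= rnorm v.
Proof. by have := normr_ge0 v; rewrite rnormE lecE /= => /andP[]. Qed.

Lemma rnorm0 : rnorm (0 : V) = 0.
Proof. by rewrite /rnorm normr0. Qed.

Lemma rnorm_eq0 (v : V) : rnorm v = 0 -> v = 0.
Proof. by move=> h; apply/normr0_eq0; rewrite rnormE h. Qed.

Lemma rnormN (v : V) : rnorm (- v) = rnorm v.
Proof. by rewrite /rnorm normrN. Qed.

Lemma rnorm_distC (u v : V) : rnorm (u - v) = rnorm (v - u).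
Proof. by rewrite /rnorm distrC. Qed.

Lemma rnormD (u v : V) : rnorm (u + v) <= rnorm u + rnorm v.
Proof. by have := ler_normD u v; rewrite !rnormE -rmorphD lecR. Qed.

Lemma rnormB (u v : V) : rnorm (u - v) <= rnorm u + rnorm v.
Proof. by rewrite -(rnormN v) rnormD. Qed.

Lemma ler_dist_rnorm (u v : V) : `|rnorm u - rnorm v| <= rnorm (u - v).
Proof.
have := rnormD (u - v) v; have := rnormD (v - u) u.
by rewrite !subrK rnorm_distC ler_norml => ? ?; apply/andP; split; lra.
Qed.

Lemma rnormZ (c : R[i]) (v : V) : rnorm (c *: v) = rnormc c * rnorm v.
Proof. by apply: complexI; have := normrZ c v; rewrite !rnormE rnormcE -rmorphM. Qed.

Lemma rnormZr (r : R) (v : V) : rnorm (r%:C *: v) = `|r| * rnorm v.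
Proof. by rewrite rnormZ rnormcR. Qed.

Lemma rnorm_sum_le (F : nat -> V) N c :
  (forall k, (k < N)%N -> rnorm (F k) <= c) -> rnorm (\sum_(0 <= k < N) F k) <= N%:R * c.
Proof.
elim: N => [|N IH] H; first by rewrite big_geq // rnorm0 mul0r.
rewrite big_nat_recr //= (le_trans (rnormD _ _)) // -natr1 mulrDl mul1r.
by rewrite lerD ?H // IH // => k kN; apply: H; rewrite ltnS ltnW.
Qed.

End RealNorm.

Section Linear.
Variables (S : comNzRingType) (V W : lmodType S) (f : V -> W).
Hypothesis lf : linear f.

Lemma linD u v : f (u + v) = f u + f v.
Proof. by have := lf 1 u v; rewrite !scale1r. Qed.

Lemma lin0 : f 0 = 0.
Proof. by apply: (addrI (f 0)); rewrite -linD !addr0. Qed.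

Lemma linZ c u : f (c *: u) = c *: f u.
Proof. by have := lf c u 0; rewrite !addr0 lin0 addr0. Qed.

Lemma linN u : f (- u) = - f u.
Proof. by rewrite -scaleN1r linZ scaleN1r. Qed.

Lemma linB u v : f (u - v) = f u - f v.
Proof. by rewrite linD linN. Qed.

End Linear.

Section BoundedOperators.
Variable R : realType.

Lemma bounded_op_le (V W : normedModType R[i]) (f : V -> W) :
  bounded_op f -> exists2 c : R, 0 < c & forall v, rnorm (f v) <= c * rnorm v.
Proof.
case=> lf cf.
pose g : {linear V -> W} := HB.pack f (GRing.isLinear.Build _ _ _ _ f lf).
have /linear_boundedP/pinfty_ex_gt0 [r r0 Bf] : bounded_near g (nbhs 0).
  exact/linear_bounded_continuous.
exists (complex.Re r); first exact: gt0_Re.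
by move=> v; have := Bf v; rewrite !rnormE {1}(gt0_realC r0) -rmorphM lecR.
Qed.

Lemma linear_rnorm_le (V W : normedModType R[i]) (f : V -> W) (M : R) :
  linear f -> (forall v, rnorm v = 1 -> rnorm (f v) <= M) ->
  forall v, rnorm (f v) <= M * rnorm v.
Proof.
move=> lf fM v; have [->|v0] := eqVneq v 0; first by rewrite (lin0 lf) !rnorm0 mulr0.
have nv0 : 0 < rnorm v.
  by rewrite lt_neqAle rnorm_ge0 andbT eq_sym; apply: contra v0 => /eqP/rnorm_eq0->.
have := fM (((rnorm v)^-1)%:C *: v).
rewrite (linZ lf) !rnormZr ger0_norm ?invr_ge0 ?rnorm_ge0 // mulVf ?gt_eqF // => /(_ erefl).
by rewrite mulrC -ler_pdivlMr ?invr_gt0 // invrK.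
Qed.

Lemma continuous_rnorm (V : normedModType R[i]) (g : R -> V) :
  continuous g -> continuous (fun s => rnorm (g s)).
Proof.
move=> cg s0; apply/cvgrPdist_lt => e e0.
have /cvgrPdist_lt/(_ e%:C) := cg s0; rewrite ltcR => /(_ e0).
apply: filterS => t; rewrite rnormE ltcR.
exact: le_lt_trans (ler_dist_rnorm (g s0) (g t)).
Qed.

End BoundedOperators.

(* [K] as a normed space over R, by restriction of scalars: Banach-Steinhaus is
   only available over a realType. *)
Section RealScalars.
Variables (R : realType) (K : completeNormedModType R[i]).

Definition Kreal : Type := K.
HB.instance Definition _ := GRing.Zmodule.copy Kreal K.

Definition Kreal_scale (r : R) (v : Kreal) : Kreal := r%:C *: (v : K).

Lemma Kreal_scaleA a b v : Kreal_scale a (Kreal_scale b v) = Kreal_scale (a * b) v.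
Proof. by rewrite /Kreal_scale scalerA rmorphM. Qed.
Lemma Kreal_scale1 : left_id 1 Kreal_scale.
Proof. by move=> v; rewrite /Kreal_scale rmorph1 scale1r. Qed.
Lemma Kreal_scaleDr : right_distributive Kreal_scale +%R.
Proof. by move=> a u v; rewrite /Kreal_scale scalerDr. Qed.
Lemma Kreal_scaleDl v : {morph Kreal_scale^~ v : a b / a + b}.
Proof. by move=> a b; rewrite /Kreal_scale rmorphD scalerDl. Qed.
HB.instance Definition _ := GRing.Zmodule_isLmodule.Build R Kreal
  Kreal_scaleA Kreal_scale1 Kreal_scaleDr Kreal_scaleDl.

Definition Kreal_norm (v : Kreal) : R := rnorm (v : K).
Lemma Kreal_normD u v : Kreal_norm (u + v) <= Kreal_norm u + Kreal_norm v.
Proof. exact: rnormD. Qed.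
Lemma Kreal_normZ (l : R) (v : Kreal) : Kreal_norm (l *: v) = `|l| * Kreal_norm v.
Proof. exact: rnormZr. Qed.
Lemma Kreal_norm_eq0 v : Kreal_norm v = 0 -> v = 0.
Proof. exact: rnorm_eq0. Qed.
HB.instance Definition _ := Lmodule_isNormed.Build R Kreal
  Kreal_normD Kreal_normZ Kreal_norm_eq0.

Lemma ball_Kreal (x y : Kreal) (e : R) : ball x e y <-> rnorm ((x : K) - y) < e.
Proof. by rewrite -ball_normE. Qed.

Lemma ball_K (x y : K) (e : R) : ball x e%:C y <-> rnorm (x - y) < e.
Proof. by rewrite -ball_normE /ball_ /= rnormE ltcR. Qed.

Lemma Kreal_complete (F : set_system Kreal) : ProperFilter F -> cauchy F -> cvg F.
Proof.
move=> FF /cauchyP cF.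
have cK : cauchy (F : set_system K).
  apply/cauchyP => e e0; have [x Fx] := cF _ (gt0_Re e0).
  by exists x; apply: filterS Fx => y /ball_Kreal; rewrite (gt0_realC e0) => /ball_K.
have [l Fl] : exists l : K, (F : set_system K) --> l.
  by exists (lim (F : set_system K)); exact: cauchy_cvg.
apply/cvg_ex; exists (l : Kreal) => A /nbhs_ballP [e /= e0 eA].
apply: (filterS eA); apply: (filterS (P := ball l e%:C)) => [y /ball_K /ball_Kreal //|].
by apply: Fl; apply: nbhsx_ballx; rewrite ltcR.
Qed.
HB.instance Definition _ := Uniform_isComplete.Build Kreal Kreal_complete.

End RealScalars.

Lemma C0_group_unif_bound (R : realType) (K : completeNormedModType R[i])
    (T : R -> K -> K) :
  C0_group T -> exists2 M : R, 0 < M &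
    forall s, 0 <= s <= 1 -> forall v, rnorm (T s v) <= M * rnorm v.
Proof.
case=> Tb _ _ Tc.
pose F := [set f : Kreal K -> Kreal K | exists2 s, 0 <= s <= 1 & f = T s].
have FB : forall f, F f -> bounded_fun_norm f /\ linear f.
  move=> f [s _ ->]; have [lf _] := Tb s; split; last first.
    by move=> a u v; rewrite /GRing.scale /= /Kreal_scale; apply: lf.
  move=> r; have [c c0 hc] := bounded_op_le (Tb s).
  exists (c * r) => x xr; apply: le_trans (hc x) _.
  by rewrite ler_wpM2l // ltW.
have Fpw : pointwise_bounded F.
  move=> x; have cx := continuous_rnorm (Tc (x : K)).
  have [c _ hc] := EVT_max ler01 (continuous_subspaceT cx).
  by exists (rnorm (T c (x : K))) => f [s s01 ->]; apply: hc; rewrite in_itv.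
have [M HM] := Banach_Steinhauss FB Fpw 1.
exists (Num.max M 1); first by rewrite lt_max ltr01 orbT.
move=> s s01; apply: linear_rnorm_le; first by case: (Tb s).
move=> v v1; apply: le_trans (HM (T s) (ex_intro2 _ _ s s01 erefl) (v : Kreal K) _) _.
  by rewrite /Num.norm /= /Kreal_norm v1.
by rewrite le_max lexx.
Qed.

Section Near.
Variable R : realType.

Lemma nbhs0_ball (P : R -> Prop) : (\forall x \near (0 : R), P x) ->
  exists2 r : R, 0 < r & forall x, `|x| < r -> P x.
Proof.
move=> /nbhs_ballP [r r0 H]; exists r => // x xr; apply: H.
by rewrite -ball_normE /ball_ /= sub0r normrN.
Qed.

Lemma dnbhs0_ball (P : R -> Prop) : (\forall x \near (0 : R)^', P x) ->
  exists2 r : R, 0 < r & forall x, 0 < `|x| < r -> P x.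
Proof.
move=> /nbhs0_ball [r r0 H]; exists r => // x /andP[x0 xr].
by apply: H => //; rewrite -normr_gt0.
Qed.

Lemma cvg_rnorm (V : normedModType R[i]) T (F : set_system T) {FF : Filter F}
    (f : T -> V) l :
  f @ F --> l -> forall e : R, 0 < e -> \forall t \near F, rnorm (l - f t) < e.
Proof.
move=> /cvgrPdist_lt H e e0; have := H e%:C; rewrite ltcR => /(_ e0).
by apply: filterS => t; rewrite rnormE ltcR.
Qed.

End Near.

Section Generator.
Variables (R : realType) (K : completeNormedModType R[i]) (T : R -> K -> K)
  (D : set K) (A : K -> K).
Hypotheses (CT : C0_group T) (GT : generator T D A).

Let T_linear s : linear (T s).
Proof. by case: CT => Tb _ _ _; case: (Tb s). Qed.

Definition orbit_dquot u (h : R) := (h%:C)^-1 *: (T h u - u).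

Lemma generator_scaleD a u v :
  D u -> D v -> D (a *: u + v) /\ A (a *: u + v) = a *: A u + A v.
Proof.
move=> Du Dv.
have L : orbit_dquot (a *: u + v) @ (0 : R)^' --> a *: A u + A v.
  have -> : orbit_dquot (a *: u + v) = (fun h => a *: orbit_dquot u h + orbit_dquot v h).
    apply: funext => h; rewrite /orbit_dquot (linD (T_linear h)) (linZ (T_linear h)).
    by rewrite opprD addrACA -scalerBr scalerDr !scalerA mulrC.
  by apply: cvgD; [apply: cvgZ; [exact: cvg_cst | exact: (GT u).2] | exact: (GT v).2].
have Dw : D (a *: u + v) by apply/(GT _).1; exists (a *: A u + A v).
by split => //; apply: cvg_unique _ ((GT _).2 Dw) L.
Qed.

(* Riemann sum, with step [d] over [N] steps, of [s |-> T s v]; it stands in for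
   the integral of the orbit, which is not available for K-valued functions. *)
Definition rsum (d : R) (N : nat) (v : K) := d%:C *: \sum_(0 <= k < N) T (k%:R * d) v.

Lemma rsumB d N u v : rsum d N (u - v) = rsum d N u - rsum d N v.
Proof.
rewrite /rsum -scalerBr -sumrB; congr (_ *: _).
by apply: eq_bigr => k _; rewrite (linB (T_linear _)).
Qed.

Lemma rsum_orbit_dquot d N u : d != 0 -> rsum d N (orbit_dquot u d) = T (N%:R * d) u - u.
Proof.
case: CT => _ T0 Tadd _ d0.
have := telescope_sumr (fun k => T (k%:R * d) u) (leq0n N); rewrite mul0r T0 => <-.
rewrite /rsum /orbit_dquot scaler_sumr; apply: eq_bigr => k _.
rewrite (linZ (T_linear _)) scalerA mulfV ?realC_eq0 // scale1r.
by rewrite (linB (T_linear _)) -Tadd -natr1 mulrDl mul1r.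
Qed.

Lemma rsum_le (M d : R) N :
    (forall s, 0 <= s <= 1 -> forall w, rnorm (T s w) <= M * rnorm w) ->
  0 < d -> N%:R * d <= 1 -> forall v, rnorm (rsum d N v) <= N%:R * d * (M * rnorm v).
Proof.
move=> TM d0 Nd1 v; rewrite /rsum rnormZr gtr0_norm // (mulrC N%:R) -mulrA ler_pM2l //.
apply: rnorm_sum_le => k kN; apply: TM; rewrite mulr_ge0 ?ler0n ?(ltW d0) //=.
by apply: le_trans Nd1; rewrite ler_pM2r // ler_nat ltnW.
Qed.

Lemma rsum_cst_err (c d : R) N y : 0 < d ->
  (forall k, (k < N)%N -> rnorm (y - T (k%:R * d) y) <= c) ->
  rnorm ((N%:R * d)%:C *: y - rsum d N y) <= N%:R * d * c.
Proof.
move=> d0 yc; rewrite /rsum rmorphM /= mulrC -scalerA -scalerBr rnormZr gtr0_norm //.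
rewrite (mulrC N%:R) -mulrA ler_pM2l // rmorph_nat scaler_nat.
have -> : y *+ N = \sum_(0 <= k < N) y by rewrite sumr_const_nat subn0.
by rewrite -sumrB; apply: rnorm_sum_le.
Qed.

(* Discrete form of [h y = (T h z - z) - \int_0^h T s (A z - y) ds
   + \int_0^h (y - T s y) ds], valid for [z] in the domain. *)
Lemma generator_orbit_le (M h c : R) y z :
    (forall s, 0 <= s <= 1 -> forall w, rnorm (T s w) <= M * rnorm w) -> 0 < M ->
  0 < h -> h <= 1 -> D z -> (forall s, 0 <= s <= h -> rnorm (y - T s y) <= c) ->
  h * rnorm y <= (M + 1) * rnorm z + h * (M * rnorm (A z - y)) + h * c.
Proof.
move=> TM M0 h0 h1 Dz Tyc; apply/ler_addgt0Pr => eta eta0.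
have hM0 : 0 < h * M by rewrite mulr_gt0.
have [r r0 Azr] := dnbhs0_ball (cvg_rnorm ((GT z).2 Dz) (divr_gt0 eta0 hM0)).
pose N := (Num.truncn (h / r)).+1; pose d := h / N%:R.
have N0 : 0 < N%:R :> R by rewrite ltr0n.
have d0 : 0 < d by rewrite divr_gt0.
have Nd : N%:R * d = h by rewrite /d mulrC divfK // gt_eqF.
have Aw : rnorm (A z - orbit_dquot z d) < eta / (h * M).
  apply: Azr; rewrite gtr0_norm // d0 /=.
  by rewrite /d ltr_pdivrMr // mulrC -ltr_pdivrMr // truncnS_gt.
have decomp : h%:C *: y = (T h z - z) - rsum d N (A z - y)
    + rsum d N (A z - orbit_dquot z d) + (h%:C *: y - rsum d N y).
  rewrite -Nd -rsum_orbit_dquot ?gt_eqF // Nd !rsumB.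
  by rewrite (addrC (_ - _)) subrKA subKr addrC subrK.
have Tz : rnorm (T h z - z) <= (M + 1) * rnorm z.
  by rewrite mulrDl mul1r; apply: le_trans (rnormB _ _) (lerD (TM h _ z) _); rewrite ?(ltW h0).
have [Ay Aw'] : rnorm (rsum d N (A z - y)) <= h * (M * rnorm (A z - y)) /\
    rnorm (rsum d N (A z - orbit_dquot z d)) <= h * (M * rnorm (A z - orbit_dquot z d)).
  by rewrite -!Nd; split; apply: rsum_le; rewrite ?Nd.
have Aw'' : h * (M * rnorm (A z - orbit_dquot z d)) <= eta.
  by rewrite mulrA -ler_pdivlMl // mulrC ltW.
have Ty : rnorm (h%:C *: y - rsum d N y) <= h * c.
  rewrite -Nd; apply: rsum_cst_err => // k kN; apply: Tyc.
  by rewrite mulr_ge0 ?ler0n ?(ltW d0) //= -Nd ler_pM2r // ler_nat ltnW.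
suff : rnorm (h%:C *: y) <= (M + 1) * rnorm z + h * (M * rnorm (A z - y)) + h * c + eta.
  by rewrite rnormZr gtr0_norm.
rewrite decomp; apply: le_trans (rnormD _ _) _; apply: le_trans (lerD (rnormD _ _) (lexx _)) _.
apply: le_trans (lerD (lerD (rnormB _ _) (lexx _)) (lexx _)) _.
lra.
Qed.

Lemma generator_graph_closure0 (y : K) :
  (forall e : R, 0 < e -> exists z, [/\ D z, rnorm z < e & rnorm (A z - y) < e]) -> y = 0.
Proof.
move=> Hap; have [M M0 TM] := C0_group_unif_bound CT.
apply: rnorm_eq0; apply/eqP; rewrite eq_le rnorm_ge0 andbT.
apply/ler_addgt0Pr => eps eps0; rewrite add0r; have eps2 : 0 < eps / 2 by rewrite divr_gt0.
have [rho rho0 Trho] : exists2 rho : R, 0 < rho &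
    forall s, `|s| < rho -> rnorm (y - T s y) < eps / 2.
  apply/nbhs0_ball/(cvg_rnorm (F := nbhs (0 : R)) _ eps2).
  by case: CT => _ T0 _ Tc; have := Tc y 0; rewrite /continuous_at T0.
pose h := Num.min (rho / 2) 1.
have h0 : 0 < h by rewrite lt_min ltr01 andbT divr_gt0.
have h1 : h <= 1 by rewrite ge_min lexx orbT.
have hrho : h < rho by rewrite gt_min; apply/orP; left; lra.
pose e := h * eps / (2 * (2 * M + 1)).
have e0 : 0 < e by rewrite /e divr_gt0 ?mulr_gt0 // ?addr_gt0 ?mulr_gt0.
have [z [Dz ze Aze]] := Hap e e0.
have := generator_orbit_le TM M0 h0 h1 Dz (c := eps / 2) (y := y).
have hs (s : R) : 0 <= s <= h -> rnorm (y - T s y) <= eps / 2.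
  by case/andP => s0 sh; apply/ltW/Trho; rewrite ger0_norm //; lra.
move=> /(_ hs) hy.
have ze' : (M + 1) * rnorm z <= (M + 1) * e by rewrite ler_pM2l ?ltW //; lra.
have Aze' : h * (M * rnorm (A z - y)) <= M * e.
  apply: le_trans (ler_piMl (mulr_ge0 (ltW M0) (rnorm_ge0 _)) h1) _.
  by rewrite ler_pM2l // ltW.
have eE : (M + 1) * e + M * e = h * (eps / 2).
  by rewrite /e; field; rewrite gt_eqF // addr_gt0 ?mulr_gt0.
by rewrite -(ler_pM2l h0); lra.
Qed.

End Generator.

Section VectorDerivative.
Variable R : realType.

Definition dquot (V : normedModType R[i]) (f : R -> V) (t h : R) : V :=
  (h%:C)^-1 *: (f (t + h) - f t).

Definition vderiv (V : normedModType R[i]) (f : R -> V) (f' : V) (t : R) :=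
  forall e : R, 0 < e -> \forall h \near (0 : R)^', rnorm (dquot f t h - f') <= e.

Lemma op_deriv_vderiv (V W : normedModType R[i]) (F : R -> V -> W) F' t v :
  op_deriv F F' t -> vderiv (fun s => F s v) (F' v) t.
Proof.
case=> _ dF e e0; have v1 : 0 < rnorm v + 1 by have := rnorm_ge0 v; lra.
have /(_ (e / (rnorm v + 1))%:C) := dF; rewrite ltcR divr_gt0 // => /(_ isT).
apply: filterS => h /(_ v); rewrite !rnormE -rmorphM lecR => Hh.
apply: le_trans Hh _.
by rewrite mulrAC ler_pdivrMr // ler_pM2l //; lra.
Qed.

Lemma vderivD (V : normedModType R[i]) (f g : R -> V) a b t :
  vderiv f a t -> vderiv g b t -> vderiv (fun s => f s + g s) (a + b) t.
Proof.
move=> df dg e e0; have e2 : 0 < e / 2 by rewrite divr_gt0.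
near=> h.
have -> : dquot (fun s => f s + g s) t h - (a + b) = (dquot f t h - a) + (dquot g t h - b).
  by rewrite /dquot opprD addrACA scalerDr addrACA opprD.
apply: le_trans (rnormD _ _) _.
have : rnorm (dquot f t h - a) <= e / 2 by near: h; exact: df.
have : rnorm (dquot g t h - b) <= e / 2 by near: h; exact: dg.
lra.
Unshelve. all: by end_near. Qed.

Lemma vderivN (V : normedModType R[i]) (f : R -> V) a t :
  vderiv f a t -> vderiv (fun s => - f s) (- a) t.
Proof.
move=> df e e0; apply: filterS (df _ e0) => h.
by rewrite /dquot -opprD scalerN -opprD rnormN.
Qed.

Lemma vderiv_remainder (V : normedModType R[i]) (f : R -> V) v t :
  vderiv f v t -> forall e : R, 0 < e ->
  \forall h \near (0 : R)^', rnorm (f (t + h) - f t - h%:C *: v) <= e * `|h|.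
Proof.
move=> df e e0; near=> h.
have hC0 : h%:C != 0 by rewrite realC_eq0; near: h; exact: nbhs_dnbhs_neq.
rewrite -[f _ - f t](scalerKV hC0) -scalerBr rnormZr mulrC ler_wpM2r //.
by near: h; exact: df.
Unshelve. all: by end_near. Qed.

Lemma vderiv_incr (V : normedModType R[i]) (c : R -> V) c' t : vderiv c c' t ->
  \forall h \near (0 : R)^', rnorm (c (t + h) - c t) <= `|h| * (rnorm c' + 1).
Proof.
move=> dc; apply: filterS (vderiv_remainder dc ltr01) => h rem.
rewrite -[c _ - _](subrK (h%:C *: c')); apply: le_trans (rnormD _ _) _.
rewrite rnormZr; lra.
Qed.

Lemma vderiv_apply (V W : normedModType R[i]) (F : R -> V -> W) (F' : V -> W)
    (c : R -> V) (c' : V) t :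
  op_deriv F F' t -> bounded_op (F t) -> vderiv c c' t ->
  vderiv (fun s => F s (c s)) (F' (c t) + F t c') t.
Proof.
move=> [bF' dF] bFt dc e e0.
have [M1 M10 F'M1] := bounded_op_le bF'; have [M2 M20 FM2] := bounded_op_le bFt.
have [lF' lFt] := (bF'.1, bFt.1).
pose a := rnorm (c t) + rnorm c' + 1.
have [a0 c'1] : 0 < a /\ 0 < rnorm c' + 1.
  by rewrite /a; have := rnorm_ge0 c'; have := rnorm_ge0 (c t); split; lra.
have e3 : 0 < e / 3 by rewrite divr_gt0.
have /(_ (e / 3 / a)%:C) := dF; rewrite ltcR !divr_gt0 // => /(_ isT) dFe.
near=> h.
have hC0 : h%:C != 0 by rewrite realC_eq0; near: h; exact: nbhs_dnbhs_neq.
have h1 : `|h| <= Num.min 1 (e / 3 / (M1 * (rnorm c' + 1))).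
  by apply/ltW; near: h; apply: dnbhs0_lt; rewrite lt_min ltr01 !divr_gt0 ?mulr_gt0.
move: h1; rewrite le_min => /andP[h1 hM1].
have Dc : rnorm (c (t + h) - c t) <= `|h| * (rnorm c' + 1).
  by near: h; exact: vderiv_incr dc.
have -> : dquot (fun s => F s (c s)) t h - (F' (c t) + F t c') =
    ((h%:C)^-1 *: (F (t + h) (c (t + h)) - F t (c (t + h))) - F' (c (t + h)))
    + F' (c (t + h) - c t) + F t (dquot c t h - c').
  rewrite (linB lF') (linB lFt) /dquot (linZ lFt) (linB lFt) opprD.
  by rewrite subrKA addrACA -scalerDr subrKA.
apply: le_trans (rnormD _ _) _; apply: le_trans (lerD (rnormD _ _) (lexx _)) _.
have t1 : rnorm ((h%:C)^-1 *: (F (t + h) (c (t + h)) - F t (c (t + h))) - F' (c (t + h)))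
    <= e / 3.
  have ct : rnorm (c (t + h)) <= a.
    rewrite -(subrK (c t) (c (t + h))); apply: (le_trans (rnormD _ _)).
    have : `|h| * (rnorm c' + 1) <= rnorm c' + 1 by rewrite ler_piMl // ltW.
    rewrite /a; lra.
  have : `|(h%:C)^-1 *: (F (t + h) (c (t + h)) - F t (c (t + h))) - F' (c (t + h))|
      <= (e / 3 / a)%:C * `|c (t + h)| by near: h; apply: filterS dFe => k; apply.
  rewrite !rnormE -rmorphM lecR => /le_trans; apply.
  by rewrite mulrAC ler_pdivrMr // ler_pM2l.
have t2 : rnorm (F' (c (t + h) - c t)) <= e / 3.
  apply: le_trans (F'M1 _) _; apply: le_trans (ler_wpM2l (ltW M10) Dc) _.
  by rewrite mulrCA -ler_pdivlMr ?mulr_gt0.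
have t3 : rnorm (F t (dquot c t h - c')) <= e / 3.
  apply: le_trans (FM2 _) _; rewrite mulrC -ler_pdivlMr //.
  by near: h; apply: dc; rewrite divr_gt0.
have : e / 3 + e / 3 + e / 3 = e by field.
lra.
Unshelve. all: by end_near. Qed.

Lemma rnorm_sum (V : normedModType R[i]) (I : finType) (F : I -> V) :
  rnorm (\sum_i F i) <= \sum_i rnorm (F i).
Proof.
elim/big_ind2 : _ => [|a b c d h1 h2|//]; first by rewrite rnorm0.
by apply: le_trans (rnormD _ _) _; apply: lerD.
Qed.

Lemma rnormc_mx_le m n (x : 'M[R[i]]_(m, n)) i j : rnormc (x i j) <= rnorm x.
Proof.
rewrite -lecR -rnormcE -rnormE [X in _ <= X]/Num.norm /= mx_normE -[leLHS]nngE num_le.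
exact: (le_bigmax _ _ (i, j)).
Qed.

Lemma mulmx_rnorm_le m n p (s : 'M[R[i]]_(m, n)) : exists2 c : R, 0 < c &
  forall v : 'M[R[i]]_(n, p), rnorm (s *m v) <= c * rnorm v.
Proof.
pose S := \sum_(i < n) \sum_(j < p) rnorm (s *m delta_mx i j).
have S0 : 0 <= S by apply: sumr_ge0 => i _; apply: sumr_ge0 => j _; exact: rnorm_ge0.
exists (S + 1) => [|v]; first by lra.
have -> : s *m v = \sum_(i < n) \sum_(j < p) v i j *: (s *m delta_mx i j).
  rewrite {1}(matrix_sum_delta v) mulmx_sumr; apply: eq_bigr => i _.
  by rewrite mulmx_sumr; apply: eq_bigr => j _; rewrite scalemxAr.
apply: le_trans (rnorm_sum _) _.
apply: (@le_trans _ _ (\sum_(i < n) \sum_(j < p) rnorm v * rnorm (s *m delta_mx i j))).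
  apply: ler_sum => i _; apply: le_trans (rnorm_sum _) _; apply: ler_sum => j _.
  by rewrite rnormZ ler_wpM2r ?rnorm_ge0 ?rnormc_mx_le.
have -> : \sum_(i < n) \sum_(j < p) rnorm v * rnorm (s *m delta_mx i j) = rnorm v * S.
  by rewrite /S mulr_sumr; apply: eq_bigr => i _; rewrite mulr_sumr.
by rewrite mulrC ler_wpM2r ?rnorm_ge0 ?lerDl.
Qed.

Lemma vderiv_mulmx m n (s : 'M[R[i]]_(m, n)) (c : R -> 'cV[R[i]]_n) c' t :
  vderiv c c' t -> vderiv (fun x => s *m c x) (s *m c') t.
Proof.
move=> dc e e0; have [k k0 sk] := mulmx_rnorm_le 1 s.
apply: filterS (dc _ (divr_gt0 e0 k0)) => h H.
rewrite /dquot -mulmxBr scalemxAr -mulmxBr; apply: le_trans (sk _) _.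
by rewrite mulrC -ler_pdivlMr.
Qed.

End VectorDerivative.

Lemma is_derive0_small (R : realType) (phi : R -> R) t :
  (forall e : R, 0 < e -> \forall h \near (0 : R)^', `|phi (t + h) - phi t| <= e * `|h|) ->
  is_derive t (1 : R) phi 0.
Proof.
move=> small.
have L : (fun h : R => h^-1 *: ((phi \o shift t) (h *: 1) - phi t)) @ (0 : R)^' --> (0 : R).
  apply/cvgrPdist_lt => e e0; have e2 : 0 < e / 2 by rewrite divr_gt0.
  near=> h.
  have hp : 0 < `|h| by rewrite normr_gt0; near: h; exact: nbhs_dnbhs_neq.
  have : `|phi (t + h) - phi t| <= e / 2 * `|h| by near: h; exact: small.
  rewrite /= sub0r normrN [h *: 1]mulr1 (addrC h) /GRing.scale /= normrM normfV.
  move=> /le_lt_trans small_h; rewrite mulrC ltr_pdivrMr //; apply: small_h.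
  by rewrite ltr_pM2r //; lra.
apply: DeriveDef; first by apply/cvg_ex; exists 0.
exact: cvg_lim.
Unshelve. all: by end_near. Qed.

Lemma derive0_const (R : realType) (phi : R -> R) :
  (forall t : R, is_derive t (1 : R) phi 0) -> forall a b, phi a = phi b.
Proof.
move=> dphi; suff le_ab a b : a < b -> phi a = phi b.
  by move=> a b; case: (ltgtP a b) => [/le_ab|/le_ab|->].
move=> ab; have [c _] := MVT ab (fun x _ => dphi x)
  (derivable_within_continuous (fun x _ => @ex_derive _ _ _ _ _ _ _ (dphi x))).
by rewrite mul0r => /eqP; rewrite subr_eq0 => /eqP.
Qed.

Section GraphDistance.
Variables (R : realType) (K : completeNormedModType R[i]) (T : R -> K -> K)
  (D : set K) (A : K -> K).
Hypotheses (CT : C0_group T) (GT : generator T D A).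
Variables (f g f' g' : R -> K).
Hypotheses (Df : forall t, D (f t)) (Df' : forall t, D (f' t))
  (Ag : forall t, A (f' t) = g' t)
  (df : forall t, vderiv f (f' t) t) (dg : forall t, vderiv g (g' t) t).

Definition graph_dists t := [set r | exists2 w, D w & r = rnorm (f t - w) + rnorm (g t - A w)].
Definition graph_dist t := inf (graph_dists t).

Lemma graph_dists_ge0 t r : graph_dists t r -> 0 <= r.
Proof. by move=> [w _ ->]; rewrite addr_ge0 ?rnorm_ge0. Qed.

Lemma graph_dists_neq0 t : graph_dists t !=set0.
Proof. by exists (rnorm (f t - f t) + rnorm (g t - A (f t))); exists (f t). Qed.

Lemma graph_dist_le t w : D w -> graph_dist t <= rnorm (f t - w) + rnorm (g t - A w).
Proof.
by move=> Dw; apply: ge_inf; [exists 0 => r /graph_dists_ge0 | exists w].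
Qed.

Lemma graph_dist_ge0 t : 0 <= graph_dist t.
Proof. by apply: lb_le_inf; [exact: graph_dists_neq0 | exact: graph_dists_ge0]. Qed.

Lemma graph_dist_move s t c u : D u ->
  graph_dist s <= graph_dist t + (rnorm (f s - f t - c *: u) + rnorm (g s - g t - c *: A u)).
Proof.
move=> Du; rewrite -lerBlDr; apply: lb_le_inf; first exact: graph_dists_neq0.
move=> r [w Dw ->]; rewrite lerBlDr.
have [Dw' Aw'] := generator_scaleD CT GT c Du Dw.
have split (x y p v : K) : x - (p + v) = (y - v) + (x - y - p).
  by rewrite [RHS]addrC -!addrA opprD (addrCA (- y)) addKr.
apply: le_trans (graph_dist_le s Dw') _; rewrite Aw' addrACA.
by rewrite (split _ (f t)) (split _ (g t)); apply: lerD; apply: rnormD.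
Qed.

Definition lin_err t h :=
  rnorm (f (t + h) - f t - h%:C *: f' t) + rnorm (g (t + h) - g t - h%:C *: g' t).

Lemma graph_dist_lipschitz t h : `|graph_dist (t + h) - graph_dist t| <= lin_err t h.
Proof.
have flip (u v w : K) : rnorm (v - u - (- h%:C) *: w) = rnorm (u - v - h%:C *: w).
  by rewrite -rnormN scaleNr !opprB addrC.
rewrite ler_norml lerBlDl lerNl opprB lerBlDl.
have := graph_dist_move (t + h) t (h%:C) (Df' t); rewrite Ag => ->.
have := graph_dist_move t (t + h) (- h%:C) (Df' t); rewrite Ag !flip => ->.
by [].
Qed.

Lemma graph_dist_derive0 t : is_derive t (1 : R) graph_dist 0.
Proof.
apply: is_derive0_small => e e0; have e2 : 0 < e / 2 by rewrite divr_gt0.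
near=> h; apply: le_trans (graph_dist_lipschitz t h) _.
have : rnorm (f (t + h) - f t - h%:C *: f' t) <= e / 2 * `|h|.
  by near: h; exact: vderiv_remainder.
have : rnorm (g (t + h) - g t - h%:C *: g' t) <= e / 2 * `|h|.
  by near: h; exact: vderiv_remainder.
rewrite /lin_err; lra.
Unshelve. all: by end_near. Qed.

Lemma graph_transport x0 x : A (f x0) = g x0 -> A (f x) = g x.
Proof.
move=> Afg0.
have dist0 : graph_dist x = 0.
  rewrite -(derive0_const graph_dist_derive0 x0); apply/eqP.
  rewrite eq_le graph_dist_ge0 andbT.
  by have := graph_dist_le x0 (Df x0); rewrite subrr Afg0 subrr rnorm0 addr0.
apply/eqP; rewrite eq_sym -subr_eq0; apply/eqP.
apply: (generator_graph_closure0 CT GT) => e e0.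
have [r [w Dw ->] re] : exists2 r, graph_dists x r & r < e.
  by apply: inf_lt; [exact: graph_dists_neq0 | rewrite -/(graph_dist x) dist0].
have [Dz Az] := generator_scaleD CT GT (-1) (Df x) Dw.
exists ((-1) *: f x + w); split => //; rewrite ?Az !scaleN1r.
  by rewrite addrC rnorm_distC; have := rnorm_ge0 (g x - A w); lra.
have -> : - A (f x) + A w - (g x - A (f x)) = - (g x - A w).
  by rewrite !opprB addrAC addKr addrC.
by rewrite rnormN; have := rnorm_ge0 (f x - w); lra.
Qed.

End GraphDistance.

Section Lyapunov.
Variables (R : realType) (K : completeNormedModType R[i]) (D : set K) (A Az : K -> K)
  (sigma1 sigma2 gamma : 'M[R[i]]_2)
  (B : R -> 'cV[R[i]]_2 -> K) (C : R -> K -> 'cV[R[i]]_2) (X : R -> K -> K).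
Hypotheses (genA : C0_group_generator D A) (sigma1_unit : sigma1 \in unitmx)
  (Bb : forall x, bounded_op (B x)) (Breg : forall x e, D (B x (sigma2 *m e)))
  (dB : forall x, op_deriv B (fun e => - (A (B x (sigma2 *m (invmx sigma1 *m e)))
                                          + B x (gamma *m (invmx sigma1 *m e)))) x)
  (dC : forall x, exists C' : K -> 'cV[R[i]]_2, op_deriv C C' x /\
     forall u, D u -> C' u = invmx sigma1 *m (- (sigma2 *m C x (Az u)) + gamma *m C x u))
  (dX : forall x, op_deriv X (fun u => B x (sigma2 *m C x u)) x)
  (XD : forall x u, D u -> D (X x u)).

Definition lyapunov x :=
  forall u, D u -> A (X x u) + X x (Az u) + B x (sigma1 *m C x u) = 0.

Lemma lyapunov_rhs_deriv u t : D u ->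
  vderiv (fun s => - (X s (Az u) + B s (sigma1 *m C s u))) (A (B t (sigma2 *m C t u))) t.
Proof.
move=> Du; have [C' [dCt C'E]] := dC t; have lB := (Bb t).1.
have dc := vderiv_mulmx sigma1 (op_deriv_vderiv u dCt).
have := vderivN (vderivD (op_deriv_vderiv (Az u) (dX t)) (vderiv_apply (dB t) (Bb t) dc)).
rewrite C'E // mulKmx // mulKVmx // (linD lB) (linN lB).
by rewrite addrCA addNKr opprD opprK addrK.
Qed.

Lemma lyapunov_transport x0 x : lyapunov x0 -> lyapunov x.
Proof.
have [T [CT GT]] := genA; move=> L0 u Du.
pose g t := - (X t (Az u) + B t (sigma1 *m C t u)).
have Afg0 : A (X x0 u) = g x0 by apply/eqP; rewrite -addr_eq0 addrA L0.
have := graph_transport CT GT (g := g) (fun t => XD t Du) (fun t => Breg t (C t u))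
  (fun t => erefl) (fun t => op_deriv_vderiv u (dX t)) (fun t => lyapunov_rhs_deriv t Du) x Afg0.
by rewrite /g => ->; rewrite -addrA addNr.
Qed.

End Lyapunov.

Lemma lyapunov_inverse (R : realType) (K : normedModType R[i]) (D : set K)
    (A Az S X Xinv : K -> K) :
  linear X -> cancel Xinv X -> cancel X Xinv ->
  (forall u, D u -> D (X u)) -> (forall u, D u -> D (Xinv u)) ->
  (forall u, D u -> A (X u) + X (Az u) + S u = 0) <->
  (forall u', D u' -> Az (Xinv u') + Xinv (A u') + Xinv (S (Xinv u')) = 0).
Proof.
move=> lX XK XinvK DX DXinv.
have XinvD a b : Xinv (a + b) = Xinv a + Xinv b.
  by rewrite -{1}(XK a) -{1}(XK b) -(linD lX) XinvK.
have Xinv0 : Xinv 0 = 0 by rewrite -{1}(lin0 lX) XinvK.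
split=> [L u' Du'|L u Du].
  have := L _ (DXinv _ Du'); rewrite XK => /(congr1 Xinv).
  by rewrite !XinvD XinvK Xinv0 (addrC (Xinv _)).
have := L _ (DX _ Du); rewrite XinvK => /(congr1 X).
by rewrite !(linD lX) !XK (lin0 lX) (addrC (X _)).
Qed.

Unset Implicit Arguments.
Set Strict Implicit.

Theorem mainTheorem4 (R : realType) (K : completeNormedModType R[i])
  (ip : K -> K -> R[i]) (D : set K) (A Az : K -> K)
  (sigma1 sigma2 gamma : 'M[R[i]]_2)
  (B : R -> 'cV[R[i]]_2 -> K) (C : R -> K -> 'cV[R[i]]_2) (X : R -> K -> K) :
  krein_space ip ->
  (* A and A_zeta generate C_0 groups, with the same dense domain D *)
  C0_group_generator D A -> C0_group_generator D Az -> dense D ->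
  (* the 2x2 matrices *)
  sigma1 = adjmx sigma1 -> sigma1 \in unitmx ->
  sigma2 = adjmx sigma2 -> gamma = - adjmx gamma ->
  (* B, C, X are families of bounded operators *)
  (forall x, bounded_op (B x)) -> (forall x, bounded_op (C x)) ->
  (forall x, bounded_op (X x)) ->
  (* B(x) sigma2 is A-regular *)
  (forall x e, D (B x (sigma2 *m e))) ->
  (* d/dx B = -(A B sigma2 + B gamma) sigma1^-1 *)
  (forall x, op_deriv B (fun e => - (A (B x (sigma2 *m (invmx sigma1 *m e)))
                                      + B x (gamma *m (invmx sigma1 *m e)))) x) ->
  (* C is differentiable, with d/dx C u = sigma1^-1 (- sigma2 C Az u + gamma C u) on D *)
  (forall x, exists C' : K -> 'cV[R[i]]_2, op_deriv C C' x /\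
     forall u, D u -> C' u = invmx sigma1 *m (- (sigma2 *m C x (Az u)) + gamma *m C x u)) ->
  (* d/dx X = B sigma2 C *)
  (forall x, op_deriv X (fun u => B x (sigma2 *m C x u)) x) ->
  (* X(x) maps D(A_zeta) into D(A) *)
  (forall x u, D u -> D (X x u)) ->
  (forall x0 : R,
     (forall u, D u -> A (X x0 u) + X x0 (Az u) + B x0 (sigma1 *m C x0 u) = 0) ->
     forall x : R,
     (forall u, D u -> A (X x u) + X x (Az u) + B x (sigma1 *m C x u) = 0)) /\
  (forall Xinv : R -> K -> K,
     (forall x, continuous (Xinv x)) ->
     (forall x u, X x (Xinv x u) = u) -> (forall x u, Xinv x (X x u) = u) ->
     (forall x u, D u -> D (Xinv x u)) ->
     forall x0 : R,
     (forall u', D u' -> Az (Xinv x0 u') + Xinv x0 (A u')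
                         + Xinv x0 (B x0 (sigma1 *m C x0 (Xinv x0 u'))) = 0) ->
     forall x : R,
     (forall u', D u' -> Az (Xinv x u') + Xinv x (A u')
                         + Xinv x (B x (sigma1 *m C x (Xinv x u'))) = 0)).
Proof.
move=> _ genA _ _ _ s1u _ _ Bb _ Xb Breg dB dC dX XD.
have transport := lyapunov_transport genA s1u Bb Breg dB dC dX XD.
split=> [x0 L0 x|Xinv _ XK XinvK DXinv x0 L0 x]; first exact: transport L0.
have inverseP t := lyapunov_inverse A Az (fun u => B t (sigma1 *m C t u))
  (Xb t).1 (XK t) (XinvK t) (XD t) (DXinv t).
by apply/inverseP; apply: (transport x0); apply/inverseP.
Qed.
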